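(* Let $p$ be a prime, $q=p^m$, and $f:\mathbb{F}_q\to\mathbb{F}_p$ a function with $f(0)=0$ and $f(ax)=f(x)$ for all $a\in\mathbb{F}_p^*$, $x\in\mathbb{F}_q$. Let $I=f(\mathbb{F}_q^* )$. Then the partition $P=\{D^*_{f,i}\}_{i\in I}$ of $\mathbb{F}_q^*$ induces an $|I|$-class association scheme $(\mathbb{F}_q,\{R_i\}_{i\in I})$ if and only if $|I|=|\{W_f(\beta):\beta\in\mathbb{F}_q^*\}|$.
   Context: $\mathrm{Tr}$ is the absolute trace $\mathbb{F}_q\to\mathbb{F}_p$, $\zeta_p=e^{2\pi\sqrt{-1}/p}$, $W_f(\beta)=\sum_{x\in\mathbb{F}_q}\zeta_p^{f(x)-\mathrm{Tr}(\beta x)}$. For $i\in\mathbb{F}_p$, $D_{f,i}=\{x\in\mathbb{F}_q:f(x)=i\}$, $D^*_{f,i}=D_{f,i}\setminus\{0\}$, $I=\{f(x):x\ne0\}$. Relations on $\mathbb{F}_q$: the diagonal $R_{-1}$ and, for $i\in I$, $(\alpha,\beta)\in R_i$ iff $\alpha-\beta\in D^*_{f,i}$. The partition induces an $|I|$-class association scheme if these relations form a symmetric association scheme on $\mathbb{F}_q$ (each relation symmetric, and for any three relations $R_a,R_b,R_c$ the number $|\{w:(u,w)\in R_a,(w,v)\in R_b\}|$ is constant over $(u,v)\in R_c$). *)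

From HB Require Import structures.
From mathcomp Require Import all_boot all_order all_algebra all_field.
Set Implicit Arguments. Unset Strict Implicit. Unset Printing Implicit Defensive.
Import Order.TTheory GRing.Theory Num.Theory.
Local Open Scope ring_scope.

(* zeta_p = exp(2 pi i / p) in algC: by the documented choice of n.-root
   (minimal nonnegative argument), p.-root (-1) = exp(i pi / p). *)
Definition zeta_p (p : nat) : algC := (p.-root (-1)) ^+ 2.

(* Absolute trace F_q -> F_p, q = p^m: the unique a in F_p whose image in F
   equals sum_{i<m} x^(p^i) (this sum lies in the prime field). *)
Definition abs_trace (p : nat) (F : finFieldType) (m : nat) (x : F) : 'F_p :=
  odflt 0 [pick a : 'F_p | ((a : nat)%:R : F) == \sum_(i < m) x ^+ (p ^ i)].

Definition walsh (p : nat) (F : finFieldType) (m : nat) (f : F -> 'F_p)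
  (beta : F) : algC :=
  \sum_(x : F) zeta_p p ^+ (nat_of_ord (f x - abs_trace p m (beta * x))%R).

Definition image_set (p : nat) (F : finFieldType) (f : F -> 'F_p) : {set 'F_p} :=
  [set f x | x in [set y : F | y != 0]].

(* Relations: None is the diagonal R_{-1}; Some i is R_i. *)
Definition scheme_rel (p : nat) (F : finFieldType) (f : F -> 'F_p)
  (k : option 'F_p) : rel F :=
  fun a b => match k with
             | None => a == b
             | Some i => (a - b != 0) && (f (a - b) == i)
             end.

Definition scheme_index (p : nat) (F : finFieldType) (f : F -> 'F_p)
  : {set option 'F_p} :=
  None |: [set Some i | i in image_set f].

Definition is_sym_assoc_scheme (X K : finType) (J : {set K}) (R : K -> rel X)
  : Prop :=
  [/\ (forall x y, exists k, [/\ k \in J, R k x y &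
          forall k', k' \in J -> R k' x y -> k' = k]),
      (exists2 k0, k0 \in J & forall x y, R k0 x y = (x == y)),
      (forall k, k \in J -> exists x y, R k x y),
      (forall k, k \in J -> forall x y, R k x y = R k y x) &
      (forall a b c, a \in J -> b \in J -> c \in J ->
         exists n : nat, forall u v, R c u v ->
           #|[set w | R a u w && R b w v]| = n)].

From HB Require Import structures.
From mathcomp Require Import all_boot all_order all_algebra all_field.
Import Order.TTheory GRing.Theory Num.Theory.

Set Implicit Arguments.
Unset Strict Implicit.
Unset Printing Implicit Defensive.

Local Open Scope ring_scope.

(* Let chi_b(x) = zeta_p^(-Tr(b x)) be the additive characters of F_q and
   lambda_k = sum_(x in cell k) chi_(.)(x) the Fourier transforms of the
   indicators of the cells {0} and D*_{f,i}.  The cells form a translation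
   scheme iff every convolution of two cell indicators is constant on cells,
   i.e. iff the span X of the lambda_k is closed under pointwise products.
   X has dimension #cells and lies in the space Y of functions of b that only
   depend on the signature (lambda_k(b))_k, of dimension #signatures; a unital
   subalgebra that separates signatures contains their indicators, so X is
   closed under products iff X = Y, i.e. iff #cells = #signatures.
   Since f is F_p^*-homogeneous each lambda_k(b) is rational, so for b <> 0
   the signature is determined by W_f(b) = 1 + sum_i zeta_p^i lambda_i(b),
   because 1, zeta_p, ..., zeta_p^(p-2) are linearly independent over Q;
   the signature of b = 0 and the cell {0} add one on each side. *)

(** * Roots of unity of prime order *)

Section PrimeRootOfUnity.
Variable p : nat.
Hypothesis p_pr : prime p.

Lemma zeta_p_expp : zeta_p p ^+ p = 1.
Proof. by rewrite /zeta_p -exprM mulnC exprM rootCK ?prime_gt0 // sqrrN expr1n. Qed.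

Lemma zeta_p_neq1 : zeta_p p != 1.
Proof.
rewrite /zeta_p; set z := p.-root (-1).
have zp : z ^+ p = -1 by rewrite rootCK ?prime_gt0.
apply/negP; rewrite sqrf_eq1 => /orP[/eqP z1 | /eqP zN1].
  by move: zp; rewrite z1 expr1n => /eqP; rewrite gt_eqF // (lt_trans (ltrN10 _) ltr01).
by have := rootC_lt0 (-1 : algC) (prime_gt1 p_pr); rewrite -/z zN1 ltrN10.
Qed.

Lemma zeta_p_prim : p.-primitive_root (zeta_p p).
Proof.
have [n n_prim n_dvd] := prim_order_exists (prime_gt0 p_pr) zeta_p_expp.
have /primeP[_ /(_ n n_dvd)/orP[/eqP n1 | /eqP np]] := p_pr.
  by move: zeta_p_neq1; rewrite -(prim_expr_order n_prim) n1 expr1 eqxx.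
by move: n_prim; rewrite np.
Qed.

Lemma rat_poly_root_zeta_p (Q : {poly rat}) :
  (size Q < p)%N -> root (map_poly ratr Q) (zeta_p p) -> Q = 0.
Proof.
move=> Q_small Q_root; apply: contraTeq Q_small => Q_nz; rewrite -leqNgt.
have [mp [Dmp _] mp_dvd] := minCpolyP (zeta_p p).
have <- : size mp = p.
  have := size_cyclotomic (zeta_p p) p.
  rewrite -(minCpoly_cyclotomic zeta_p_prim) Dmp.
  rewrite (size_map_inj_poly (fmorph_inj _) (rmorph0 _)) totient_prime //.
  by move=> ->; rewrite prednK ?prime_gt0.
by apply: dvdp_leq Q_nz _; rewrite -mp_dvd.
Qed.

Lemma sum_zeta_p_exp : \sum_(i < p) zeta_p p ^+ i = 0.
Proof.
have := subrX1 (zeta_p p) p; rewrite zeta_p_expp subrr => /esym/eqP.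
by rewrite mulf_eq0 subr_eq0 (negbTE zeta_p_neq1) => /eqP.
Qed.

Lemma rat_relation_zeta_p_const (s : nat -> rat) :
  \sum_(j < p) ratr (s j) * zeta_p p ^+ j = 0 ->
  forall j, (j < p)%N -> s j = s p.-1.
Proof.
move=> s_rel j j_lt.
pose Q : {poly rat} := \poly_(i < p.-1) (s i - s p.-1).
have coefQ i : (i < p)%N -> Q`_i = s i - s p.-1.
  move=> i_lt; rewrite coef_poly; case: ltnP => // i_ge.
  have -> : i = p.-1 by apply/eqP; rewrite eqn_leq i_ge andbT -ltnS prednK ?prime_gt0.
  by rewrite subrr.
have Q0 : Q = 0.
  apply: rat_poly_root_zeta_p.
    by rewrite (leq_ltn_trans (size_poly _ _)) // prednK ?prime_gt0.
  rewrite /root (@horner_coef_wide _ p); last first.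
    by rewrite size_map_poly (leq_trans (size_poly _ _)) ?leq_pred.
  under eq_bigr => i _.
    rewrite coef_map /= coefQ // rmorphB mulrBl.
    over.
  by rewrite sumrB -mulr_sumr s_rel sum_zeta_p_exp mulr0 subrr.
by apply/eqP; rewrite -subr_eq0 -coefQ // Q0 coef0.
Qed.

Definition zeta_pow (a : 'F_p) : algC := zeta_p p ^+ a.

Lemma Fp_val_lt (a : 'F_p) : (a < p)%N.
Proof. by rewrite -[ltnRHS](Fp_cast p_pr) ltn_ord. Qed.

Lemma big_Fp (g : nat -> algC) : \sum_(a : 'F_p) g a = \sum_(i < p) g i.
Proof. by rewrite -(big_mkord xpredT) Fp_cast // big_mkord. Qed.

Lemma zeta_powD a b : zeta_pow (a + b) = zeta_pow a * zeta_pow b.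
Proof.
rewrite /zeta_pow -exprD -[RHS](prim_expr_mod zeta_p_prim) /=.
by move: (a : nat) (b : nat) => i j; rewrite Fp_cast.
Qed.

Lemma zeta_pow0 : zeta_pow 0 = 1.
Proof. exact: expr0. Qed.

Lemma zeta_pow_eq1 a : (zeta_pow a == 1) = (a == 0).
Proof. by rewrite /zeta_pow -(prim_order_dvd zeta_p_prim) /dvdn modn_small ?Fp_val_lt. Qed.

Lemma sum_zeta_pow : \sum_a zeta_pow a = 0.
Proof. by rewrite (big_Fp (fun i => zeta_p p ^+ i)) sum_zeta_p_exp. Qed.

Lemma sum_zeta_powMr c : c != 0 -> \sum_a zeta_pow (a * c) = 0.
Proof.
by move=> c_nz; rewrite -(@reindex_inj _ _ _ _ _ xpredT zeta_pow (mulIf c_nz)) sum_zeta_pow.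
Qed.

Lemma sum_nz_zeta_powMr_rat u : \sum_(a | a != 0) zeta_pow (a * u) \in Crat.
Proof.
have -> : \sum_(a | a != 0) zeta_pow (a * u) = \sum_a zeta_pow (a * u) - 1.
  by rewrite [X in _ = X - _](bigD1 0) //= mul0r zeta_pow0 addrAC subrr add0r.
rewrite rpredB ?rpred1 //; have [-> | u_nz] := eqVneq u 0.
  by under eq_bigr do rewrite mulr0 zeta_pow0; rewrite sumr_const rpred_nat.
by rewrite sum_zeta_powMr // rpred0.
Qed.

Lemma rat_relation_zeta_pow_eq0 (r : 'F_p -> algC) :
  (forall i, r i \in Crat) ->
  \sum_i zeta_pow i * r i = 0 -> \sum_i r i = 0 -> forall i, r i = 0.
Proof.
move=> r_rat rel_zeta rel_one.
pose s j := getCrat (r (inZp j)).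
have rE (i : 'F_p) : r i = ratr (s i) by rewrite /s valZpK getCratK.
have s_const := @rat_relation_zeta_p_const s.
have {}rE i : r i = ratr (s p.-1).
  rewrite rE s_const ?Fp_val_lt // -(big_Fp (fun j => ratr (s j) * zeta_p p ^+ j)).
  by rewrite -[RHS]rel_zeta; apply: eq_bigr => j _; rewrite rE mulrC.
move: rel_one; under eq_bigr do rewrite rE.
rewrite sumr_const card_Fp // => /eqP; rewrite mulrn_eq0 eqn0Ngt prime_gt0 //= => /eqP s0 i.
by rewrite rE.
Qed.

End PrimeRootOfUnity.

(** * The absolute trace *)

Section PrimeFieldEmbedding.
Variables (p : nat) (F : fieldType).
Hypothesis charFp : p \in [pchar F].

Let p_pr : prime p := pcharf_prime charFp.

Definition Fp_emb (a : 'F_p) : F := (a : nat)%:R.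

Lemma Fp_embD a b : Fp_emb (a + b) = Fp_emb a + Fp_emb b.
Proof.
rewrite /Fp_emb /=; move: (a : nat) (b : nat) => i j.
by rewrite Fp_cast // (GRing.natr_mod_pchar charFp) natrD.
Qed.

Lemma Fp_emb_is_nmod_morphism : nmod_morphism Fp_emb.
Proof. by split; last exact: Fp_embD. Qed.

Lemma Fp_embM a b : Fp_emb (a * b) = Fp_emb a * Fp_emb b.
Proof.
rewrite /Fp_emb /=; move: (a : nat) (b : nat) => i j.
by rewrite Fp_cast // (GRing.natr_mod_pchar charFp) natrM.
Qed.

Lemma Fp_emb_is_monoid_morphism : monoid_morphism Fp_emb.
Proof.
split; last exact: Fp_embM.
by rewrite /Fp_emb /= Fp_cast // modn_small ?prime_gt1.
Qed.

HB.instance Definition _ :=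
  GRing.isNmodMorphism.Build 'F_p F Fp_emb Fp_emb_is_nmod_morphism.
HB.instance Definition _ :=
  GRing.isMonoidMorphism.Build 'F_p F Fp_emb Fp_emb_is_monoid_morphism.

Lemma Fp_emb_inj : injective Fp_emb.
Proof. exact: fmorph_inj. Qed.

Lemma Fp_emb_exp_pX a i : Fp_emb a ^+ (p ^ i) = Fp_emb a.
Proof.
elim: i => [|i IHi]; first by rewrite expr1.
have a_fixed : a ^+ p = a by rewrite -{2}(expf_card a) card_Fp.
by rewrite expnSr exprM IHi -rmorphXn a_fixed.
Qed.

Lemma frobenius_fixed_Fp (y : F) : y ^+ p = y -> exists a, Fp_emb a = y.
Proof.
move=> y_fixed; have [a /eqP | notFp] := pickP (fun a => Fp_emb a == y); first by exists a.
pose P : {poly F} := 'X^p - 'X.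
have P_size : size P = p.+1.
  by rewrite size_addl ?size_polyXn // size_opp size_polyX ltnS prime_gt1.
have P_root z : z ^+ p = z -> root P z by move=> z_fixed; rewrite /root !hornerE z_fixed subrr.
have P_nz : P != 0 by rewrite -size_poly_eq0 P_size.
have all_roots : all (root P) (y :: map Fp_emb (enum 'F_p)).
  rewrite /= P_root //=; apply/allP => _ /mapP[a _ ->].
  by rewrite P_root // -[p in _ ^+ p]expn1 Fp_emb_exp_pX.
have roots_uniq : uniq (y :: map Fp_emb (enum 'F_p)).
  rewrite /= (map_inj_uniq Fp_emb_inj) enum_uniq andbT.
  by apply/mapP => -[a _ /esym/eqP]; rewrite notFp.
have := max_poly_roots P_nz all_roots roots_uniq.
by rewrite /= size_map -cardE card_Fp // P_size ltnn.
Qed.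

End PrimeFieldEmbedding.

Arguments Fp_emb : clear implicits.

Section AbsoluteTrace.
Variables (p : nat) (F : finFieldType) (m : nat).
Hypotheses (charFp : p \in [pchar F]) (cardF : #|F| = (p ^ m)%N).

Let p_pr : prime p := pcharf_prime charFp.

Local Notation Fp_emb := (Fp_emb p F).
Local Notation Tr := (abs_trace p (F := F) m).

Definition frob_trace (x : F) : F := \sum_(i < m) x ^+ (p ^ i).

Lemma frob_traceD x y : frob_trace (x + y) = frob_trace x + frob_trace y.
Proof.
rewrite /frob_trace -big_split; apply: eq_bigr => i _.
by rewrite exprDn_pchar // pnatX (pnatE _ p_pr) charFp.
Qed.

Lemma frob_trace_is_nmod_morphism : nmod_morphism frob_trace.
Proof.
split; last exact: frob_traceD.
by apply: big1 => i _; rewrite expr0n eqn0Ngt expn_gt0 prime_gt0.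
Qed.

HB.instance Definition _ :=
  GRing.isNmodMorphism.Build F F frob_trace frob_trace_is_nmod_morphism.

Lemma frob_traceZ a x : frob_trace (Fp_emb a * x) = Fp_emb a * frob_trace x.
Proof.
by rewrite /frob_trace mulr_sumr; apply: eq_bigr => i _; rewrite exprMn Fp_emb_exp_pX.
Qed.

Lemma frob_trace_expp x : frob_trace x ^+ p = frob_trace x.
Proof.
rewrite -(pFrobenius_autE charFp) rmorph_sum /=.
under eq_bigr do rewrite pFrobenius_autE -exprM -expnSr.
transitivity (\sum_(i < m.+1) x ^+ (p ^ i) - x).
  rewrite big_ord_recl /= expn0 expr1 addrC addKr.
  by apply: eq_bigr => i _; rewrite /bump leq0n add1n.
by rewrite /frob_trace big_ord_recr /= -cardF expf_card addrK.
Qed.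

Lemma abs_traceE x : Fp_emb (Tr x) = frob_trace x.
Proof.
rewrite /abs_trace; case: pickP => [a /eqP // | notFp].
have [a /eqP] := frobenius_fixed_Fp charFp (frob_trace_expp x).
by rewrite notFp.
Qed.

Lemma abs_trace0 : Tr 0 = 0.
Proof. by apply: (Fp_emb_inj charFp); rewrite abs_traceE !raddf0. Qed.

Lemma abs_traceD x y : Tr (x + y) = Tr x + Tr y.
Proof. by apply: (Fp_emb_inj charFp); rewrite (Fp_embD charFp) !abs_traceE raddfD. Qed.

Lemma abs_traceZ a x : Tr (Fp_emb a * x) = a * Tr x.
Proof. by apply: (Fp_emb_inj charFp); rewrite (Fp_embM charFp) !abs_traceE frob_traceZ. Qed.

(* The trace polynomial sum_i 'X^(p^i) is nonzero of degree p^(m-1) < #|F|. *)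
Lemma abs_trace_neq0 : exists y : F, Tr y != 0.
Proof.
have [y y_nz | trace0] := pickP (fun y : F => Tr y != 0); first by exists y.
have m_gt0 : (0 < m)%N.
  by rewrite lt0n; apply: contraTneq (card_finNzRing_gt1 F) => m0; rewrite cardF m0.
pose T : {poly F} := \sum_(i < m) 'X^(p ^ i).
have T_root y : root T y.
  have /negbFE/eqP Ty0 := trace0 y.
  rewrite /root /T horner_sum; under eq_bigr do rewrite hornerXn.
  by rewrite -/(frob_trace y) -abs_traceE Ty0 raddf0.
have T_nz : T != 0.
  apply/eqP => /(congr1 (coefp 1)); apply/eqP; rewrite /= coef0 /T coef_sum.
  rewrite -(prednK m_gt0) big_ord_recl coefXn expn0 eqxx big1 ?addr0 ?oner_eq0 // => i _.
  have p_pow_gt1 : (1 < p ^ (lift ord0 i))%N by rewrite -{1}(expn0 p) ltn_exp2l ?prime_gt1.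
  by rewrite coefXn ltn_eqF.
have T_size : (size T <= (p ^ m.-1).+1)%N.
  apply: (leq_trans (size_sum _ _ _)); apply/bigmax_leqP => i _.
  by rewrite size_polyXn ltnS leq_pexp2l ?prime_gt0 // -ltnS prednK.
have all_roots : all (root T) (enum F) by apply/allP => y _; exact: T_root.
have := leq_trans (max_poly_roots T_nz all_roots (enum_uniq _)) T_size.
by rewrite -cardE cardF ltnS leqNgt ltn_exp2l ?prime_gt1 // ltn_predL m_gt0.
Qed.

End AbsoluteTrace.

(** * A Fourier criterion for translation schemes *)

Section FfunAlgebra.
Variables (aT : finType) (R : comNzRingType).
Implicit Types (u v : {ffun aT -> R^o}) (c : R).

Lemma ffunM u v x : (u * v) x = u x * v x.
Proof. exact: ffunE. Qed.

Lemma ffun1E x : (1 : {ffun aT -> R^o}) x = 1.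
Proof. exact: ffunE. Qed.

Lemma ffunB u v x : (u - v) x = u x - v x.
Proof. by rewrite !ffunE. Qed.

Lemma ffunZ c u x : (c *: u) x = c * u x.
Proof. exact: ffunE. Qed.

Lemma scalerAl_ffun c u v : (c *: u) * v = c *: (u * v).
Proof. by apply/ffunP => x; rewrite !(ffunM, ffunZ) mulrA. Qed.

Lemma scalerAr_ffun c u v : u * (c *: v) = c *: (u * v).
Proof. by apply/ffunP => x; rewrite !(ffunM, ffunZ) mulrCA. Qed.

End FfunAlgebra.

Arguments ffun1E {aT R} x.

Section FourierCriterion.
Variables (G : finZmodType) (K : finType) (cls : G -> K) (chi : G -> G -> algC).
Hypotheses (chiD : forall b x y, chi b (x + y) = chi b x * chi b y)
  (chiC : forall b x, chi b x = chi x b)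
  (chi0 : forall b, chi b 0 = 1)
  (chi_orth : forall b, \sum_x chi b x = if b == 0 then #|G|%:R else 0)
  (cls0 : forall x, (cls x == cls 0) = (x == 0)).

Local Notation fG := {ffun G -> algC^o}.

Definition fourier (g : G -> algC) : fG := [ffun b => \sum_x g x * chi b x].

Definition cell (k : K) (x : G) : algC := (cls x == k)%:R.

Definition classes : {set K} := [set cls x | x in G].

(* conv_count a b (u - v) counts the w with cls (u - w) = a and cls (w - v) = b,
   so translation_scheme says that the relations cls (x - y) = k have
   well-defined intersection numbers. *)
Definition conv_count (a b : K) (z : G) : nat :=
  #|[set w | (cls (z - w) == a) && (cls w == b)]|.

Definition translation_scheme : Prop :=
  forall a b, a \in classes -> b \in classes ->
  forall z z', cls z = cls z' -> conv_count a b z = conv_count a b z'.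

Definition signature (b : G) : {ffun K -> algC} := [ffun k => fourier (cell k) b].

Definition signatures : seq {ffun K -> algC} := undup [seq signature b | b <- enum G].

Definition signature_indicator (s : {ffun K -> algC}) : fG :=
  [ffun b => (signature b == s)%:R].

Definition cell_basis : #|classes|.-tuple fG :=
  [tuple fourier (cell (enum_val i)) | i < #|classes|].

Definition cell_space : {vspace fG} := <<cell_basis>>.

Definition signature_space : {vspace fG} := <<map signature_indicator signatures>>.

Lemma card_G_neq0 : #|G|%:R != 0 :> algC.
Proof. by rewrite pnatr_eq0 -lt0n; apply/card_gt0P; exists 0. Qed.

Lemma fourier_inversion g z : \sum_b fourier g b * chi b (- z) = #|G|%:R * g z.
Proof.
under eq_bigr do rewrite ffunE mulr_suml.
rewrite exchange_big /=.
under eq_bigr => x _.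
  under eq_bigr do rewrite -mulrA -chiD chiC.
  rewrite -mulr_sumr chi_orth subr_eq0.
  over.
rewrite (bigD1 z) //= eqxx big1 ?addr0 1?mulrC // => x /negbTE ->.
exact: mulr0.
Qed.

Lemma fourier_conv_count a b :
  fourier (fun z => (conv_count a b z)%:R) = fourier (cell a) * fourier (cell b).
Proof.
apply/ffunP => beta; rewrite ffunM mulrC !ffunE mulr_suml.
under eq_bigr => z _ do rewrite /conv_count -sum1_card natr_sum big_mkcond mulr_suml.
rewrite exchange_big /=; apply: eq_bigr => w _.
rewrite (reindex_inj (addIr w)) mulr_sumr; apply: eq_bigr => x _ /=.
rewrite inE addrK chiD /cell.
by case: (cls x == a); case: (cls w == b); rewrite /= ?mul1r ?mul0r ?mulr0 // mulrC.
Qed.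

Lemma sum_signature_weighted (w : K -> algC) b :
  \sum_k w k * signature b k = \sum_x w (cls x) * chi b x.
Proof.
under eq_bigr do rewrite ffunE ffunE mulr_sumr.
rewrite exchange_big /=; apply: eq_bigr => x _.
rewrite (bigD1 (cls x)) //= /cell eqxx mul1r big1 ?addr0 ?mulrA // => k /negbTE.
by rewrite eq_sym => ->; rewrite mul0r mulr0.
Qed.

Lemma sum_signature b : \sum_k signature b k = \sum_x chi b x.
Proof.
transitivity (\sum_k 1 * signature b k); first by apply: eq_bigr => k _; rewrite mul1r.
by rewrite sum_signature_weighted; apply: eq_bigr => x _; rewrite mul1r.
Qed.

Lemma fourier_cell_cls0 : fourier (cell (cls 0)) = 1.
Proof.
apply/ffunP => b; rewrite !ffunE (bigD1 0) //= /cell eqxx mul1r chi0 big1 ?addr0 // => x.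
by rewrite cls0 => /negbTE ->; rewrite mul0r.
Qed.

Lemma free_biorthogonal n (X : n.-tuple fG) :
  (forall i : 'I_n, exists w : G -> algC,
     forall j : 'I_n, \sum_b w b * X`_j b = (i == j)%:R) ->
  free X.
Proof.
move=> dual; apply/freeP => c comb0 i; have [w w_dual] := dual i.
have : \sum_b w b * (\sum_j c j *: X`_j) b = 0.
  by rewrite comb0; apply: big1 => b _; rewrite ffunE mulr0.
under eq_bigr do rewrite sum_ffunE mulr_sumr.
rewrite exchange_big /=.
under eq_bigr => j _.
  under eq_bigr do rewrite ffunE mulrCA.
  rewrite -mulr_sumr w_dual.
  over.
rewrite (bigD1 i) //= eqxx mulr1 big1 ?addr0 // => j /negbTE ij.
by rewrite eq_sym ij mulr0.
Qed.

Lemma cell_basisE (i : 'I_#|classes|) : cell_basis`_i = fourier (cell (enum_val i)).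
Proof. by rewrite -tnth_nth tnth_mktuple. Qed.

Lemma free_cell_basis : free cell_basis.
Proof.
apply: free_biorthogonal => i; have /imsetP[x _ x_cls] := enum_valP i.
exists (fun b => chi b (- x) / #|G|%:R) => j.
under eq_bigr do rewrite mulrC mulrA.
rewrite -mulr_suml cell_basisE fourier_inversion mulrAC divff ?card_G_neq0 //.
by rewrite mul1r /cell -x_cls (inj_eq enum_val_inj) eq_sym.
Qed.

Lemma free_signature_indicators : free (map signature_indicator signatures).
Proof.
apply: (@free_biorthogonal _ (map_tuple signature_indicator (in_tuple signatures))) => i.
have /mapP[b0 _ sig_b0] : nth (signature 0) signatures i \in [seq signature b | b <- enum G].
  by rewrite -mem_undup mem_nth.
exists (fun b => (b == b0)%:R) => j.
rewrite (bigD1 b0) //= eqxx mul1r big1 ?addr0 => [|b /negbTE ->]; last by rewrite mul0r.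
rewrite (nth_map (signature 0)) // ffunE -sig_b0.
by rewrite (nth_uniq _ (ltn_ord i) (ltn_ord j) (undup_uniq _)).
Qed.

Lemma dim_cell_space : \dim cell_space = #|classes|.
Proof. by rewrite (eqnP free_cell_basis) size_tuple. Qed.

Lemma dim_signature_space : \dim signature_space = size signatures.
Proof. by rewrite (eqnP free_signature_indicators) size_map. Qed.

Lemma mem_signature_space (v : fG) :
  (forall b c, signature b = signature c -> v b = v c) -> v \in signature_space.
Proof.
move=> v_const; pose rep s := odflt 0 [pick c | signature c == s].
have rep_sig b : v (rep (signature b)) = v b.
  by rewrite /rep; case: pickP => [c /eqP /v_const // | /(_ b)]; rewrite eqxx.
have -> : v = \sum_(s <- signatures) v (rep s) *: signature_indicator s.
  apply/ffunP => b; rewrite sum_ffunE (bigD1_seq (signature b)) ?undup_uniq //=; last first.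
    by rewrite mem_undup map_f ?mem_enum.
  rewrite big1_seq ?addr0 => [|s /andP[s_neq _]]; last first.
    by rewrite ffunZ ffunE eq_sym (negbTE s_neq) mulr0.
  by rewrite ffunZ ffunE eqxx mulr1 rep_sig.
by rewrite big_seq; apply: rpred_sum => s s_in; rewrite rpredZ // memv_span // map_f.
Qed.

Lemma cell_space_sub : (cell_space <= signature_space)%VS.
Proof.
apply/span_subvP => _ /mapP[i _ ->]; apply: mem_signature_space => b c eq_sig.
by have := congr1 (fun s : {ffun K -> algC} => s (enum_val i)) eq_sig; rewrite !ffunE.
Qed.

Lemma fourier_cell_in k : fourier (cell k) \in cell_space.
Proof.
have [k_in | k_notin] := boolP (k \in classes).
  by rewrite -(enum_rankK_in k_in k_in) -cell_basisE memv_span ?mem_nth ?size_tuple.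
suff -> : fourier (cell k) = 0 by exact: rpred0.
apply/ffunP => b; rewrite !ffunE big1 // => x _; rewrite /cell.
by case: eqP => [cls_x | _]; [move: k_notin; rewrite -cls_x imset_f | rewrite mul0r].
Qed.

Lemma fourier_class_fun_in (g : G -> algC) :
  (forall z z', cls z = cls z' -> g z = g z') -> fourier g \in cell_space.
Proof.
move=> g_class; pose rep k := odflt 0 [pick x | cls x == k].
have rep_cls x : g (rep (cls x)) = g x.
  by rewrite /rep; case: pickP => [y /eqP /g_class // | /(_ x)]; rewrite eqxx.
have -> : fourier g = \sum_(k in classes) g (rep k) *: fourier (cell k).
  apply/ffunP => b; rewrite sum_ffunE ffunE.
  transitivity (\sum_x \sum_(k in classes) cell k x * (g (rep k) * chi b x)).
    apply: eq_bigr => x _; rewrite (bigD1 (cls x)) ?imset_f //= /cell eqxx mul1r rep_cls.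
    by rewrite big1 ?addr0 // => k /andP[_ /negbTE]; rewrite eq_sym => ->; rewrite mul0r.
  rewrite exchange_big /=; apply: eq_bigr => k _; rewrite !ffunE scaler_sumr.
  by apply: eq_bigr => x _; rewrite mulrCA.
by apply: rpred_sum => k _; rewrite rpredZ // fourier_cell_in.
Qed.

Lemma cell_space_fourier_inv v z z' : v \in cell_space -> cls z = cls z' ->
  \sum_b v b * chi b (- z) = \sum_b v b * chi b (- z').
Proof.
move=> /coord_span -> eq_cls.
suff inv (c : 'I_#|classes| -> algC) y :
    \sum_b (\sum_i c i *: cell_basis`_i) b * chi b (- y) =
    #|G|%:R * \sum_i c i * cell (enum_val i) y.
  by rewrite !inv /cell eq_cls.
under eq_bigr do rewrite sum_ffunE mulr_suml.
rewrite exchange_big mulr_sumr; apply: eq_bigr => i _.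
under eq_bigr do rewrite ffunE -mulrA.
by rewrite -mulr_sumr cell_basisE fourier_inversion mulrCA.
Qed.

Lemma translation_scheme_mul_closed :
  translation_scheme -> {in cell_space &, forall u v, u * v \in cell_space}.
Proof.
move=> scheme u v /coord_span -> /coord_span ->.
rewrite mulr_suml; apply: rpred_sum => i _; rewrite scalerAl_ffun rpredZ //.
rewrite mulr_sumr; apply: rpred_sum => j _; rewrite scalerAr_ffun rpredZ //.
rewrite !cell_basisE -fourier_conv_count; apply: fourier_class_fun_in => z z' eq_cls.
by rewrite (scheme _ _ (enum_valP i) (enum_valP j) z z' eq_cls).
Qed.

Section MulClosed.
Hypothesis mul_closed : {in cell_space &, forall u v, u * v \in cell_space}.

Lemma signature_indicator_in_cell_space s :
  s \in signatures -> signature_indicator s \in cell_space.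
Proof.
rewrite mem_undup => /mapP[b0 _ ->] {s}; set s := signature b0.
have one_in : 1 \in cell_space by rewrite -fourier_cell_cls0 fourier_cell_in.
(* h c is 1 on the signature class s and, when c lies outside it, vanishes at c. *)
pose h c : fG := if [pick k | signature c k != s k] is Some k
  then (s k - signature c k)^-1 *: (fourier (cell k) - signature c k *: (1 : fG)) else 1.
have h_in c : h c \in cell_space.
  rewrite /h; case: pickP => [k _ | _] //.
  by rewrite rpredZ // rpredB ?rpredZ ?fourier_cell_in.
suff -> : signature_indicator s = \prod_c h c.
  by apply: (big_ind (fun u : fG => u \in cell_space)) => // u v; apply: mul_closed.
apply/ffunP => b.
rewrite ffunE (big_morph (fun u : fG => u b) (fun u v => ffunM u v b) (ffun1E b)).
have hE c k : ((s k - signature c k)^-1 *: (fourier (cell k) - signature c k *: (1 : fG))) b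
    = (s k - signature c k)^-1 * (signature b k - signature c k).
  by rewrite ffunZ ffunB ffunZ ffun1E mulr1 [signature b k]ffunE.
have [sig_b | sig_b] := eqVneq (signature b) s.
  rewrite big1 // => c _; rewrite /h; case: pickP => [k k_neq | _]; last exact: ffun1E.
  by rewrite hE sig_b mulVf // subr_eq0 eq_sym.
rewrite (bigD1 b) //= /h; case: pickP => [k _ | sig_eq]; first by rewrite hE subrr mulr0 mul0r.
by case/eqP: sig_b; apply/ffunP => k; apply/eqP/negbFE/sig_eq.
Qed.

Lemma mul_closed_card_signatures : size signatures = #|classes|.
Proof.
apply/eqP; rewrite eqn_leq -dim_cell_space -dim_signature_space (dimvS cell_space_sub) andbT.
apply: dimvS; apply/span_subvP => _ /mapP[s s_in ->].
exact: signature_indicator_in_cell_space.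
Qed.

End MulClosed.

Lemma card_signatures_translation_scheme :
  size signatures = #|classes| -> translation_scheme.
Proof.
move=> card_sig a b _ _ z z' eq_cls.
have eq_space : cell_space = signature_space.
  apply/eqP; rewrite eqEdim cell_space_sub dim_cell_space dim_signature_space card_sig.
  exact: leqnn.
have conv_in : fourier (fun z => (conv_count a b z)%:R) \in cell_space.
  rewrite fourier_conv_count eq_space; apply: mem_signature_space => c d eq_sig.
  have := congr1 (fun s : {ffun K -> algC} => (s a, s b)) eq_sig.
  by rewrite !ffunM !ffunE => -[-> ->].
have inv := fourier_inversion (fun z => (conv_count a b z)%:R).
apply/eqP; rewrite -(eqr_nat algC); apply/eqP; apply: (mulfI card_G_neq0).
by rewrite -[LHS](inv z) -[RHS](inv z'); exact: cell_space_fourier_inv.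
Qed.

Theorem translation_schemeP : translation_scheme <-> size signatures = #|classes|.
Proof.
split=> [/translation_scheme_mul_closed | ]; first exact: mul_closed_card_signatures.
exact: card_signatures_translation_scheme.
Qed.

End FourierCriterion.

(** * The partition of F_q by the values of f *)

Lemma undup_map_in (T1 T2 : eqType) (g : T1 -> T2) (s : seq T1) :
  {in s &, injective g} -> undup (map g s) = map g (undup s).
Proof.
elim: s => [//|x s IHs] g_inj /=.
have g_inj_s : {in s &, injective g}.
  by move=> y z ys zs; apply: g_inj; rewrite inE ?ys ?zs orbT.
have -> : (g x \in map g s) = (x \in s).
  apply/mapP/idP => [[y ys gxy] | xs]; last by exists x.
  by rewrite (g_inj x y) ?inE ?eqxx ?ys ?orbT.
by case: (x \in s); rewrite /= IHs.
Qed.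

Lemma sum_option (V : nmodType) (T : finType) (g : option T -> V) :
  \sum_k g k = g None + \sum_i g (Some i).
Proof.
rewrite (bigD1 None) //=; congr (_ + _).
rewrite (reindex_omap Some id) /=; last by case.
by apply: eq_bigl => i; rewrite eqxx.
Qed.

Section FiniteFieldScheme.
Variables (p : nat) (F : finFieldType) (m : nat).
Hypotheses (charFp : p \in [pchar F]) (cardF : #|F| = (p ^ m)%N).
Variable f : F -> 'F_p.
Hypotheses (f0 : f 0 = 0)
  (f_homog : forall a x, a != 0 -> f (Fp_emb p F a * x) = f x).

Let p_pr : prime p := pcharf_prime charFp.

Local Notation Tr := (abs_trace p (F := F) m).

Definition add_char (b x : F) : algC := zeta_pow (- Tr (b * x)).

(* The cell {0} is indexed by None, matching the diagonal relation of scheme_rel. *)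
Definition level (x : F) : option 'F_p := if x == 0 then None else Some (f x).

Lemma add_charD b x y : add_char b (x + y) = add_char b x * add_char b y.
Proof. by rewrite /add_char mulrDr abs_traceD // opprD (zeta_powD p_pr). Qed.

Lemma add_charC b x : add_char b x = add_char x b.
Proof. by rewrite /add_char mulrC. Qed.

Lemma add_char0 b : add_char b 0 = 1.
Proof. by rewrite /add_char mulr0 abs_trace0 // oppr0 zeta_pow0. Qed.

Lemma add_char_orth b : \sum_x add_char b x = if b == 0 then #|F|%:R else 0.
Proof.
have [-> | b_nz] := eqVneq b 0.
  by under eq_bigr do rewrite add_charC add_char0; rewrite sumr_const.
have [y0 Tr_y0] := abs_trace_neq0 charFp cardF.
pose y := b^-1 * y0.
have char_y : add_char b y != 1.
  by rewrite /add_char /y mulrA divff // mul1r (zeta_pow_eq1 p_pr) oppr_eq0.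
have shift : \sum_x add_char b x = add_char b y * \sum_x add_char b x.
  rewrite [LHS](reindex_inj (addIr y)) /= mulr_sumr.
  by apply: eq_bigr => x _; rewrite add_charD mulrC.
apply/eqP; move/eqP: shift; rewrite -subr_eq0 -{1}(mul1r (\sum_x _)) -mulrBl mulf_eq0.
by rewrite subr_eq0 eq_sym (negbTE char_y).
Qed.

Lemma level0 x : (level x == level 0) = (x == 0).
Proof. by rewrite /level eqxx; case: (x == 0). Qed.

Lemma level_scale a x : a != 0 -> level (Fp_emb p F a * x) = level x.
Proof.
move=> a_nz; have emb_nz : Fp_emb p F a != 0 by rewrite fmorph_eq0.
by rewrite /level mulf_eq0 (negbTE emb_nz) /=; case: (x == 0); rewrite ?f_homog.
Qed.

Lemma levelN x : level (- x) = level x.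
Proof.
by rewrite -mulN1r -(rmorphN1 (Fp_emb p F)) level_scale // oppr_eq0 oner_eq0.
Qed.

Local Notation sig := (signature level add_char).

(* Averaging over a in F_p^*, using level (a x) = level x, turns (p - 1) * sig b k
   into a combination of the rational sums sum_(a != 0) zeta_p^(a u). *)
Lemma signature_rat b k : sig b k \in Crat.
Proof.
pose c : algC := #|[pred a : 'F_p | a != 0]|%:R.
have c_nz : c != 0.
  by rewrite pnatr_eq0 -lt0n; apply/card_gt0P; exists 1; rewrite inE oner_eq0.
suff avg : c * sig b k = \sum_x cell level k x * \sum_(a | a != 0) zeta_pow (a * - Tr (b * x)).
  rewrite -[X in X \in _](mulKf c_nz) avg rpredM ?rpredV ?rpred_nat //.
  by apply: rpred_sum => x _; rewrite rpredM ?rpred_nat ?sum_nz_zeta_powMr_rat.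
rewrite /c mulr_natl -sumr_const.
transitivity (\sum_(a | a != 0) \sum_x cell level k x * zeta_pow (a * - Tr (b * x))).
  apply: eq_bigr => a a_nz; rewrite !ffunE.
  have emb_nz : Fp_emb p F a != 0 by rewrite fmorph_eq0.
  rewrite (reindex_inj (mulfI emb_nz)); apply: eq_bigr => x _.
  by rewrite /cell level_scale // /add_char mulrCA abs_traceZ // mulrN.
by rewrite exchange_big /=; apply: eq_bigr => x _; rewrite mulr_sumr.
Qed.

Lemma signature_None b : sig b None = 1.
Proof.
have -> : None = level 0 by rewrite /level eqxx.
by rewrite ffunE (fourier_cell_cls0 add_char0 level0) ffunE.
Qed.

Lemma sum_signature_orth b : \sum_k sig b k = if b == 0 then #|F|%:R else 0.
Proof. by rewrite sum_signature add_char_orth. Qed.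

Lemma sum_signature_Some b : b != 0 -> \sum_i sig b (Some i) = -1.
Proof.
move=> b_nz; have := sum_signature_orth b.
by rewrite (negbTE b_nz) sum_option signature_None => /eqP; rewrite addrC addr_eq0 => /eqP.
Qed.

Lemma signature0_neq b : b != 0 -> sig 0 != sig b.
Proof.
move=> b_nz; apply/eqP => eq_sig; have := sum_signature_orth 0.
rewrite eq_sig sum_signature_orth eqxx (negbTE b_nz) => /esym/eqP.
by rewrite pnatr_eq0 eqn0Ngt (ltnW (card_finNzRing_gt1 F)).
Qed.

Definition walsh_of_signature (s : {ffun option 'F_p -> algC}) : algC :=
  s None + \sum_i zeta_pow i * s (Some i).

Lemma walsh_signature b : walsh m f b = walsh_of_signature (sig b).
Proof.
pose w (k : option 'F_p) : algC := if k is Some i then zeta_pow i else 1.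
transitivity (\sum_x w (level x) * add_char b x).
  apply: eq_bigr => x _; rewrite -/(zeta_pow _) (zeta_powD p_pr) /add_char /level.
  by case: eqP => [-> | _]; rewrite ?f0 ?zeta_pow0.
by rewrite -sum_signature_weighted sum_option mul1r.
Qed.

Lemma walsh_of_signature_inj b c : b != 0 -> c != 0 ->
  walsh_of_signature (sig b) = walsh_of_signature (sig c) -> sig b = sig c.
Proof.
move=> b_nz c_nz; rewrite /walsh_of_signature !signature_None => /addrI eq_walsh.
pose r i := sig b (Some i) - sig c (Some i).
have r_rat i : r i \in Crat by rewrite rpredB ?signature_rat.
have r_zeta : \sum_i zeta_pow i * r i = 0.
  by under eq_bigr do rewrite mulrBr; rewrite sumrB eq_walsh subrr.
have r_one : \sum_i r i = 0 by rewrite sumrB !sum_signature_Some // subrr.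
apply/ffunP => -[i|]; last by rewrite !signature_None.
by apply/eqP; rewrite -subr_eq0; apply/eqP; apply: (rat_relation_zeta_pow_eq0 p_pr r_rat).
Qed.

Lemma card_signatures :
  size (signatures level add_char) =
  (size (undup [seq walsh m f b | b <- enum F & b != 0])).+1.
Proof.
set L := [seq b <- enum F | b != 0].
have -> : [seq walsh m f b | b <- L] = map walsh_of_signature (map sig L).
  by rewrite -map_comp; apply: eq_map => b; rewrite /= walsh_signature.
rewrite undup_map_in ?size_map; last first.
  move=> _ _ /mapP[b bL ->] /mapP[c cL ->].
  move: bL cL; rewrite !mem_filter => /andP[b_nz _] /andP[c_nz _].
  exact: walsh_of_signature_inj.
have enumF : enum F =i 0 :: L.
  by move=> x; rewrite mem_enum in_cons /L mem_filter mem_enum; case: eqP.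
rewrite /signatures (perm_size (perm_undup (eq_mem_map sig enumF))) /= ifN //.
by apply/mapP => -[b]; rewrite mem_filter => /andP[b_nz _] /eqP; apply/negP/signature0_neq.
Qed.

Lemma scheme_index_classes : scheme_index f = classes level.
Proof.
apply/setP => -[i|]; rewrite /scheme_index !inE /=; last first.
  by apply/esym/imsetP; exists 0 => //; rewrite /level eqxx.
rewrite (mem_imset _ _ (@Some_inj _)); apply/imsetP/imsetP => [[x] | [x _]].
  by rewrite inE => x_nz ->; exists x => //; rewrite /level (negbTE x_nz).
by rewrite /level; case: eqP => // /eqP x_nz [->]; exists x; rewrite ?inE.
Qed.

Lemma card_classes : #|classes level| = #|image_set f|.+1.
Proof.
rewrite -scheme_index_classes cardsU1 card_imset; last exact: Some_inj.
suff -> : None \notin [set Some i | i in image_set f] by [].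
by apply/imsetP => -[].
Qed.

Lemma scheme_relE k a b : scheme_rel f k a b = (level (a - b) == k).
Proof.
case: k => [i|] /=; rewrite /level; first by case: (a - b == 0).
by rewrite subr_eq0; case: (a == b).
Qed.

Lemma card_scheme_paths a b u v :
  #|[set w | scheme_rel f a u w && scheme_rel f b w v]| = conv_count level a b (u - v).
Proof.
rewrite /conv_count -[RHS](card_preimset _ (addIr (- v))); apply: eq_card => w.
by rewrite !inE !scheme_relE opprB addrA subrK.
Qed.

Lemma sym_assoc_scheme_translation :
  is_sym_assoc_scheme (scheme_index f) (scheme_rel f) <-> translation_scheme level.
Proof.
rewrite scheme_index_classes; split.
  case=> _ _ _ _ inter a b a_in b_in z z' eq_level.
  have z_in : level z \in classes level by apply: imset_f.
  have [n n_const] := inter a b (level z) a_in b_in z_in.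
  have count y : level y = level z -> conv_count level a b y = n.
    move=> y_level; rewrite -(subr0 y) -card_scheme_paths n_const //.
    by rewrite scheme_relE subr0 y_level.
  by rewrite !count.
move=> scheme; split.
- move=> x y; exists (level (x - y)); split; first exact: imset_f.
    by rewrite scheme_relE.
  by move=> k _; rewrite scheme_relE => /eqP.
- by exists None => //; apply/imsetP; exists 0 => //; rewrite /level eqxx.
- by move=> _ /imsetP[z _ ->]; exists z, 0; rewrite scheme_relE subr0.
- by move=> k _ x y; rewrite !scheme_relE -opprB levelN.
- move=> a b _ a_in b_in /imsetP[z0 _ ->].
  exists (conv_count level a b z0) => u v; rewrite scheme_relE card_scheme_paths.
  by move=> /eqP uv_level; apply: scheme.
Qed.

End FiniteFieldScheme.

Unset Implicit Arguments.

Theorem corollary4p5 (p : nat) (F : finFieldType) (m : nat)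
  (hp : prime p) (hchar : p \in [pchar F]) (hq : #|F| = (p ^ m)%N)
  (f : F -> 'F_p)
  (hf0 : f 0 = 0)
  (hfhom : forall (a : 'F_p) (x : F), a != 0 -> f (((a : nat)%:R : F) * x) = f x) :
  is_sym_assoc_scheme (scheme_index f) (scheme_rel f)
  <-> #|image_set f| = size (undup [seq walsh m f b | b <- enum F & b != 0]).
Proof.
apply: (iff_trans (sym_assoc_scheme_translation hchar hfhom)).
apply: (iff_trans (translation_schemeP (add_charD hchar hq) (@add_charC p F m)
  (add_char0 hchar hq) (add_char_orth hchar hq) (level0 f))).
rewrite (card_signatures hchar hq hf0 hfhom) card_classes.
by split => [[] | ->].
Qed.
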